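(* Let $R$ be a commutative local ring and $s\in U(R)$. Then the ring $M_2(R;s)$ is not strongly $J$-clean.
   Context: A commutative ring $R$ is local if it has a unique maximal ideal $J(R)$ (its Jacobson radical); $U(R)$ is the group of units. For $s\in R$, $M_2(R;s)$ denotes the ring whose elements are the $2\times 2$ arrays $\left[\begin{smallmatrix} a&b\\ c&d\end{smallmatrix}\right]$ with $a,b,c,d\in R$, with componentwise addition and multiplication $\left[\begin{smallmatrix} a&b\\ c&d\end{smallmatrix}\right]\left[\begin{smallmatrix} a'&b'\\ c'&d'\end{smallmatrix}\right]=\left[\begin{smallmatrix} aa'+s^2bc'&ab'+bd'\\ ca'+dc'&s^2cb'+dd'\end{smallmatrix}\right]$. An element $a$ of a ring $T$ is strongly $J$-clean if there is an idempotent $e\in T$ with $ae=ea$ and $a-e\in J(T)$; a ring is strongly $J$-clean if all its elements are. *)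

From HB Require Import structures.
From mathcomp Require Import all_boot all_order all_algebra.
From mathcomp Require Import ring.

Set Implicit Arguments.
Unset Strict Implicit.
Unset Printing Implicit Defensive.

Import GRing.Theory.
Local Open Scope ring_scope.

Definition left_ideal (T : nzRingType) (I : T -> Prop) : Prop :=
  [/\ I 0,
      (forall x y, I x -> I y -> I (x + y)) &
      (forall r x, I x -> I (r * x))].

Definition proper_left_ideal (T : nzRingType) (I : T -> Prop) : Prop :=
  left_ideal I /\ ~ I 1.

Definition maximal_left_ideal (T : nzRingType) (I : T -> Prop) : Prop :=
  proper_left_ideal I /\
  forall K : T -> Prop, proper_left_ideal K ->
    (forall x, I x -> K x) -> forall x, K x -> I x.

Definition jacobson (T : nzRingType) (x : T) : Prop :=
  forall I : T -> Prop, maximal_left_ideal I -> I x.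

(* A commutative ring is local if it has a unique maximal ideal
   (in a commutative ring, left ideals are exactly the ideals). *)
Definition local_ring (R : comNzRingType) : Prop :=
  exists M : R -> Prop, maximal_left_ideal M /\
    forall K : R -> Prop, maximal_left_ideal K -> forall x, K x <-> M x.

Definition idempotent (T : nzRingType) (e : T) : Prop := e * e = e.

Definition strongly_J_clean_elt (T : nzRingType) (a : T) : Prop :=
  exists e : T, [/\ idempotent e, a * e = e * a & jacobson (a - e)].

Definition strongly_J_clean (T : nzRingType) : Prop :=
  forall a : T, strongly_J_clean_elt a.

Record M2s (R : comNzRingType) (s : R) := MkM2s {
  m11 : R; m12 : R; m21 : R; m22 : R }.
Arguments MkM2s {R s}.

Section M2sRing.
Variables (R : comNzRingType) (s : R).

Definition M2s_to (A : M2s s) : R * R * R * R :=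
  (m11 A, m12 A, m21 A, m22 A).
Definition M2s_of (t : R * R * R * R) : M2s s :=
  let: (a, b, c, d) := t in MkM2s a b c d.
Lemma M2s_toK : cancel M2s_to M2s_of. Proof. by case. Qed.

HB.instance Definition _ := Equality.copy (M2s s) (can_type M2s_toK).
HB.instance Definition _ := Choice.copy (M2s s) (can_type M2s_toK).

Definition M2s_zero : M2s s := MkM2s 0 0 0 0.
Definition M2s_opp (A : M2s s) : M2s s :=
  MkM2s (- m11 A) (- m12 A) (- m21 A) (- m22 A).
Definition M2s_add (A B : M2s s) : M2s s :=
  MkM2s (m11 A + m11 B) (m12 A + m12 B) (m21 A + m21 B) (m22 A + m22 B).

Lemma M2s_ext (A B : M2s s) :
  m11 A = m11 B -> m12 A = m12 B -> m21 A = m21 B -> m22 A = m22 B -> A = B.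
Proof. by case: A; case: B => /= ? ? ? ? ? ? ? ? -> -> -> ->. Qed.

Lemma M2s_addA : associative M2s_add.
Proof. by move=> A B C; apply: M2s_ext => /=; rewrite addrA. Qed.
Lemma M2s_addC : commutative M2s_add.
Proof. by move=> A B; apply: M2s_ext => /=; rewrite addrC. Qed.
Lemma M2s_add0 : left_id M2s_zero M2s_add.
Proof. by move=> A; apply: M2s_ext => /=; rewrite add0r. Qed.
Lemma M2s_addN : left_inverse M2s_zero M2s_opp M2s_add.
Proof. by move=> A; apply: M2s_ext => /=; rewrite addNr. Qed.

HB.instance Definition _ :=
  GRing.isZmodule.Build (M2s s) M2s_addA M2s_addC M2s_add0 M2s_addN.

Definition M2s_one : M2s s := MkM2s 1 0 0 1.
Definition M2s_mul (A B : M2s s) : M2s s :=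
  MkM2s (m11 A * m11 B + s ^+ 2 * m12 A * m21 B)
        (m11 A * m12 B + m12 A * m22 B)
        (m21 A * m11 B + m22 A * m21 B)
        (s ^+ 2 * m21 A * m12 B + m22 A * m22 B).

Lemma M2s_mulA : associative M2s_mul.
Proof. by move=> A B C; apply: M2s_ext => /=; ring. Qed.
Lemma M2s_mul1 : left_id M2s_one M2s_mul.
Proof. by move=> A; apply: M2s_ext => /=; ring. Qed.
Lemma M2s_mulr1 : right_id M2s_one M2s_mul.
Proof. by move=> A; apply: M2s_ext => /=; ring. Qed.
Lemma M2s_mulDl : left_distributive M2s_mul +%R.
Proof. by move=> A B C; apply: M2s_ext => /=; ring. Qed.
Lemma M2s_mulDr : right_distributive M2s_mul +%R.
Proof. by move=> A B C; apply: M2s_ext => /=; ring. Qed.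
Lemma M2s_one_neq0 : M2s_one != 0.
Proof.
apply/eqP => /(congr1 (@m11 R s)) /= /eqP; by rewrite oner_eq0.
Qed.

HB.instance Definition _ :=
  GRing.Zmodule_isNzRing.Build (M2s s) M2s_mulA M2s_mul1 M2s_mulr1
    M2s_mulDl M2s_mulDr M2s_one_neq0.

End M2sRing.

Notation "''M_2' ( R ; s )" := (@M2s R s)
  (at level 8, format "''M_2' ( R ;  s )") : type_scope.

(* Every maximal ideal M of R yields two maximal left ideals of M_2(R; s),
   "first column in M" and "second column in M" (maximality uses that s is a
   unit, to clear the factor s^2 in the product).  Hence every element of
   J(M_2(R; s)) has all its entries in M.  If [0 0; 1 0] = e + j with e
   idempotent and j in the radical, then e_11, e_22 and 1 - e_21 lie in M,
   and the (2,1) entry of e^2 = e gives e_21 = e_21 e_11 + e_22 e_21 in M, so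
   1 lies in M. *)

From HB Require Import structures.
From mathcomp Require Import all_boot all_order all_algebra.
From mathcomp Require Import ring.
From Stdlib Require Import Classical.

Set Implicit Arguments.
Unset Strict Implicit.
Unset Printing Implicit Defensive.

Import GRing.Theory.
Local Open Scope ring_scope.

Section LeftIdeals.
Variable T : nzRingType.
Implicit Types (I M : T -> Prop) (x : T).

Lemma left_idealN I x : left_ideal I -> I x -> I (- x).
Proof. by move=> [_ _ IM] Ix; rewrite -mulN1r; apply: IM. Qed.

Lemma left_ideal_lincomb I a b x y :
  left_ideal I -> I x -> I y -> I (a * x + b * y).
Proof. by move=> [_ ID IM] Ix Iy; apply: ID; apply: IM. Qed.

Lemma maximal_left_ideal_comaximal M x :
  maximal_left_ideal M -> ~ M x -> exists m r, M m /\ 1 = m + r * x.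
Proof.
move=> [[[M0 MD MM] _] Mmax] Mx; apply: NNPP => no_cover.
pose K y := exists m r, M m /\ y = m + r * x.
have K_proper : proper_left_ideal K.
  split; last by move=> [m [r [Mm E]]]; apply: no_cover; exists m, r.
  split.
  - by exists 0, 0; rewrite mul0r addr0.
  - move=> _ _ [m [r [Mm ->]]] [m' [r' [Mm' ->]]].
    by exists (m + m'), (r + r'); rewrite mulrDl addrACA; split; [exact: MD|].
  - move=> t _ [m [r [Mm ->]]].
    by exists (t * m), (t * r); rewrite mulrDr mulrA; split; [exact: MM|].
apply: Mx; apply: (Mmax K K_proper).
- by move=> y My; exists y, 0; rewrite mul0r addr0.
- by exists 0, 1; rewrite mul1r add0r.
Qed.

Lemma proper_left_ideal_maximal I :
  proper_left_ideal I -> (forall x, ~ I x -> exists a, I (1 - a * x)) ->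
  maximal_left_ideal I.
Proof.
move=> I_proper I_inv; split=> // K [[_ KD KM] K1] IK x Kx.
apply: NNPP => /I_inv [a Ia]; apply: K1.
by rewrite -(subrK (a * x) 1); apply: KD; [exact: IK | exact: KM].
Qed.

End LeftIdeals.

Section ColumnIdeals.
Variables (R : comUnitRingType) (s : R) (M : R -> Prop).
Hypotheses (s_unit : s \is a GRing.unit) (M_max : maximal_left_ideal M).

Let M_ideal : left_ideal M. Proof. by case: M_max => -[]. Qed.
Let M_proper : ~ M 1. Proof. by case: M_max => -[]. Qed.
Let M0 : M 0. Proof. by case: M_ideal. Qed.

Definition first_col_ideal (X : M2s s) : Prop := M (m11 X) /\ M (m21 X).
Definition second_col_ideal (X : M2s s) : Prop := M (m12 X) /\ M (m22 X).

Lemma first_col_ideal_maximal : maximal_left_ideal first_col_ideal.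
Proof.
have [_ MD _] := M_ideal.
apply: proper_left_ideal_maximal.
  split; last by case.
  split=> [//|X Y [? ?] [? ?]|A X [? ?]]; first by split; apply: MD.
  by split; apply: left_ideal_lincomb.
move=> X notX; have [X11|nX11] := classic (M (m11 X)).
  have nX21 : ~ M (m21 X) by move=> X21; apply: notX.
  have [m [r [Mm E]]] := maximal_left_ideal_comaximal M_max nX21.
  exists (MkM2s 0 ((s ^+ 2)^-1 * r) 0 0); split=> /=.
  - by rewrite mulVKr ?unitrX // E (_ : _ - _ = m) //; ring.
  - by rewrite (_ : _ - _ = 0) //; ring.
have [m [r [Mm E]]] := maximal_left_ideal_comaximal M_max nX11.
exists (MkM2s r 0 0 0); split=> /=.
- by rewrite E (_ : _ - _ = m) //; ring.
- by rewrite (_ : _ - _ = 0) //; ring.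
Qed.

Lemma second_col_ideal_maximal : maximal_left_ideal second_col_ideal.
Proof.
have [_ MD _] := M_ideal.
apply: proper_left_ideal_maximal.
  split; last by case.
  split=> [//|X Y [? ?] [? ?]|A X [? ?]]; first by split; apply: MD.
  by split; apply: left_ideal_lincomb.
move=> X notX; have [X22|nX22] := classic (M (m22 X)).
  have nX12 : ~ M (m12 X) by move=> X12; apply: notX.
  have [m [r [Mm E]]] := maximal_left_ideal_comaximal M_max nX12.
  exists (MkM2s 0 0 ((s ^+ 2)^-1 * r) 0); split=> /=.
  - by rewrite (_ : _ - _ = 0) //; ring.
  - by rewrite mulVKr ?unitrX // E (_ : _ - _ = m) //; ring.
have [m [r [Mm E]]] := maximal_left_ideal_comaximal M_max nX22.
exists (MkM2s 0 0 0 r); split=> /=.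
- by rewrite (_ : _ - _ = 0) //; ring.
- by rewrite E (_ : _ - _ = m) //; ring.
Qed.

Lemma jacobson_M2s_entries (X : M2s s) :
  jacobson X -> [/\ M (m11 X), M (m12 X), M (m21 X) & M (m22 X)].
Proof.
move=> JX.
have [X11 X21] := JX _ first_col_ideal_maximal.
by have [X12 X22] := JX _ second_col_ideal_maximal.
Qed.

Lemma M2s_E21_not_J_clean :
  ~ exists e : M2s s, idempotent e /\ jacobson (MkM2s 0 0 1 0 - e).
Proof.
move=> [e [e_idem /jacobson_M2s_entries [/= Me11 _ Me21 Me22]]].
have [_ MD _] := M_ideal.
have {}Me11 : M (m11 e) by have := left_idealN M_ideal Me11; rewrite add0r opprK.
have {}Me22 : M (m22 e) by have := left_idealN M_ideal Me22; rewrite add0r opprK.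
have e21E : m21 e = m21 e * m11 e + m21 e * m22 e.
  by rewrite [_ * m22 e]mulrC -{1}e_idem /=.
apply: M_proper; rewrite -(subrK (m21 e) 1); apply: MD => //.
by rewrite e21E; apply: left_ideal_lincomb.
Qed.

End ColumnIdeals.

Theorem corollary2p10 (R : comUnitRingType) (s : R) :
  local_ring R -> s \is a GRing.unit -> ~ strongly_J_clean (M2s s).
Proof.
move=> [M [M_max _]] s_unit J_clean.
apply: (M2s_E21_not_J_clean s_unit M_max).
by have [e [e_idem _ Je]] := J_clean (MkM2s 0 0 1 0); exists e.
Qed.
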